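(* In the setting described in the context, with $\phi_1(0),\phi_2(0)>0$, one has $y_1'(x)>0$ for all $x\in(0,1)$. Moreover, if $\phi_1(0)<1$, $\phi_1(0)\phi_2(0)<1$ and $1<\phi_1(0)+\phi_1(0)\phi_2(0)$, then $y_2'$, $y_3'$ and $y_2'+y_3'$ have no zeroes on $(0,1)$; that is, $K$, $\phi_1$, $\phi_2$ and $\phi_1\phi_2$ are monotonic on $(0,1)$.
   Context: Setting: $(M^4,g)$ is a Hadamard manifold (complete, simply connected, non-positive sectional curvature) which is conformally compact Einstein ($\mathrm{Ric}_g=-3g$, and $x^2g$ extends continuously to $\overline M$ for a boundary defining function $x$) with conformal infinity $(\mathbb{S}^3,[\hat g])$, $\hat g=\lambda_1\sigma_1^2+\lambda_2\sigma_2^2+\lambda_3\sigma_3^2$, where $\sigma_i$ are the standard left-invariant $1$-forms on $\mathrm{SU}(2)\cong\mathbb{S}^3$ and $\lambda_1,\lambda_2,\lambda_3>0$ are pairwise distinct. The conformal Killing fields of $\hat g$ extend to Killing fields of $g$ having a common fixed point $p_0\in M$ (the center of gravity); with $r$ the distance to $p_0$, $x=e^{-r}$ is a geodesic defining function, and along a geodesic ray $\theta=\theta_0$ from $p_0$, in polar coordinates $(x,\theta^1,\theta^2,\theta^3)$ with $d\theta^i=\sigma_i$ at $\theta_0$, one has $g=x^{-2}\big(dx^2+\tfrac{(1-x^2)^2}{4}\bar h\big)$ with $\bar h=I_1(d\theta^1)^2+I_2(d\theta^2)^2+I_3(d\theta^3)^2$, where $I_i\in C^\infty([0,1])$ are positive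 with $I_i(1)=1$. Set $K=I_1I_2I_3$, $\phi_1=I_2/I_1$, $\phi_2=I_3/I_2$, $y_1=\log K$, $y_2=\log\phi_1$, $y_3=\log\phi_2$. Then $K(0)<1$ and $(y_1,y_2,y_3)$ satisfy on $[0,1]$: $y_1''-x^{-1}(1+3x^2)(1-x^2)^{-1}y_1'+\frac16(y_1')^2+\frac13[(y_2')^2+y_2'y_3'+(y_3')^2]=0$; $y_1''-x^{-1}(5+7x^2)(1-x^2)^{-1}y_1'+\frac12(y_1')^2+16(1-x^2)^{-2}(3-\Upsilon)=0$ with $\Upsilon=K^{-1/3}[2(\phi_1^2\phi_2)^{1/3}+2(\phi_1^{-1}\phi_2)^{1/3}+2(\phi_1\phi_2^2)^{-1/3}-\phi_1^{-4/3}\phi_2^{-2/3}-\phi_1^{2/3}\phi_2^{-2/3}-\phi_1^{2/3}\phi_2^{4/3}]$; $y_2''-2x^{-1}(1+2x^2)(1-x^2)^{-1}y_2'+\frac12y_1'y_2'+32(1-x^2)^{-2}K^{-1/3}[\phi_1^{2/3}\phi_2^{1/3}-\phi_1^{-1/3}\phi_2^{1/3}-\phi_1^{2/3}\phi_2^{-2/3}+\phi_1^{-4/3}\phi_2^{-2/3}]=0$; $y_3''-2x^{-1}(1+2x^2)(1-x^2)^{-1}y_3'+\frac12y_1'y_3'+32(1-x^2)^{-2}K^{-1/3}[\phi_1^{-1/3}\phi_2^{1/3}-\phi_1^{-1/3}\phi_2^{-2/3}-\phi_1^{2/3}\phi_2^{4/3}+\phi_1^{2/3}\phi_2^{-2/3}]=0$;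 with boundary conditions $\phi_1(0)=\lambda_2/\lambda_1$, $\phi_2(0)=\lambda_3/\lambda_2$, $K(1)=\phi_1(1)=\phi_2(1)=1$, $y_i'(0)=y_i'(1)=0$ for $i=1,2,3$. *)

From Stdlib Require Import Reals.
From Coquelicot Require Import Coquelicot.
Open Scope R_scope.

Definition smooth (f : R -> R) : Prop := forall (n : nat) (x : R), ex_derive_n f n x.

Section Quantities.
Variables I1 I2 I3 : R -> R.

Definition KK (x : R) : R := I1 x * I2 x * I3 x.
Definition phi1 (x : R) : R := I2 x / I1 x.
Definition phi2 (x : R) : R := I3 x / I2 x.
Definition y1 (x : R) : R := ln (KK x).
Definition y2 (x : R) : R := ln (phi1 x).
Definition y3 (x : R) : R := ln (phi2 x).

Definition Upsilon (x : R) : R :=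
  let p := phi1 x in let q := phi2 x in
  Rpower (KK x) (-1/3) *
  (2 * Rpower (p ^ 2 * q) (1/3) + 2 * Rpower (/ p * q) (1/3)
   + 2 * Rpower (p * q ^ 2) (-1/3)
   - Rpower p (-4/3) * Rpower q (-2/3)
   - Rpower p (2/3) * Rpower q (-2/3)
   - Rpower p (2/3) * Rpower q (4/3)).

Definition eq1 (x : R) : Prop :=
  Derive (Derive y1) x - / x * (1 + 3 * x ^ 2) / (1 - x ^ 2) * Derive y1 x
  + 1/6 * (Derive y1 x) ^ 2
  + 1/3 * ((Derive y2 x) ^ 2 + Derive y2 x * Derive y3 x + (Derive y3 x) ^ 2) = 0.

Definition eq2 (x : R) : Prop :=
  Derive (Derive y1) x - / x * (5 + 7 * x ^ 2) / (1 - x ^ 2) * Derive y1 x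
  + 1/2 * (Derive y1 x) ^ 2
  + 16 / (1 - x ^ 2) ^ 2 * (3 - Upsilon x) = 0.

Definition eq3 (x : R) : Prop :=
  let p := phi1 x in let q := phi2 x in
  Derive (Derive y2) x - 2 * / x * (1 + 2 * x ^ 2) / (1 - x ^ 2) * Derive y2 x
  + 1/2 * Derive y1 x * Derive y2 x
  + 32 / (1 - x ^ 2) ^ 2 * Rpower (KK x) (-1/3) *
    (Rpower p (2/3) * Rpower q (1/3) - Rpower p (-1/3) * Rpower q (1/3)
     - Rpower p (2/3) * Rpower q (-2/3) + Rpower p (-4/3) * Rpower q (-2/3)) = 0.

Definition eq4 (x : R) : Prop :=
  let p := phi1 x in let q := phi2 x in
  Derive (Derive y3) x - 2 * / x * (1 + 2 * x ^ 2) / (1 - x ^ 2) * Derive y3 x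
  + 1/2 * Derive y1 x * Derive y3 x
  + 32 / (1 - x ^ 2) ^ 2 * Rpower (KK x) (-1/3) *
    (Rpower p (-1/3) * Rpower q (1/3) - Rpower p (-1/3) * Rpower q (-2/3)
     - Rpower p (2/3) * Rpower q (4/3) + Rpower p (2/3) * Rpower q (-2/3)) = 0.

End Quantities.

From Stdlib Require Import Reals Lra Psatz.
From Coquelicot Require Import Coquelicot.
Open Scope R_scope.

(* Write [s = y2], [t = y3].  With [h = y1' (1 - x^2)^2 / x], eq1 gives
   [h' = - (1 - x^2)^2 / x * (y1'^2 / 6 + (s'^2 + s' t' + t'^2) / 3) <= 0], and [h 1 = 0],
   so [y1' >= 0].  If [y1'] vanished at [x0] it would vanish on [[x0, 1)], hence so would
   [s'] and [t'] (at a zero of [y1'] eq1 forces [s' = t' = 0]); then [s x0 = t x0 = 0], and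
   backward uniqueness for eq3, eq4 and then eq1 makes [y1'] vanish on [(0, 1)], so that
   [K 0 = K 1 = 1].

   In [s, t] the equations eq3, eq4 read [f'' = alpha f' - beta F(s, t)] with [beta > 0],
   and the forces of [s], [t] and [s + t] factor explicitly.  A maximum principle, applied
   jointly to [s] and [s + t] (negative at [0], zero at [1]), shows both are [<= 0]; an
   interior zero of their derivatives is then excluded either by the equation at a minimum
   of the derivative or by backward uniqueness.  So [phi1 + phi1 phi2 = e^s + e^(s+t)]
   increases and stays [> 1], which makes the force of [t] oppose the sign of [t]; as
   [t 0 <> 0] (i.e. [lambda2 <> lambda3]), the same argument applies to [t] or [- t]. *)

(** * Calculus on an interval *)

Lemma is_derive_continuity_pt f x l : is_derive f x l -> continuity_pt f x.
Proof.
  intros Hd. apply derivable_continuous_pt.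
  exact (exist _ l (proj1 (is_derive_Reals f x l) Hd)).
Qed.

Lemma ex_derive_continuity_pt f x : ex_derive f x -> continuity_pt f x.
Proof. intros [l Hd]. exact (is_derive_continuity_pt f x l Hd). Qed.

Lemma continuity_bounded_segment f a b : a <= b ->
  (forall x, a <= x <= b -> continuity_pt f x) ->
  exists M, forall x, a <= x <= b -> Rabs (f x) <= M.
Proof.
  intros Hab Hc.
  assert (Habs : forall x, a <= x <= b -> continuity_pt (fun y => Rabs (f y)) x).
  { intros x Hx. apply (continuity_pt_comp f Rabs); [exact (Hc x Hx)|apply Rcontinuity_abs]. }
  destruct (continuity_ab_maj _ a b Hab Habs) as [m [Hm _]].
  exists (Rabs (f m)). exact Hm.
Qed.

Lemma is_derive_nonneg_le f f' a b : a <= b ->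
  (forall x, a <= x <= b -> is_derive f x (f' x)) ->
  (forall x, a < x < b -> 0 <= f' x) -> f a <= f b.
Proof.
  intros Hab Hd Hpos.
  (* MVT_gen may pick an endpoint, where [f'] has no sign: clip it *)
  destruct (MVT_gen f a b (fun x => Rmax (f' x) 0)) as [c [_ Hc]].
  - intros x Hx. rewrite Rmin_left, Rmax_right in Hx by lra.
    rewrite Rmax_left by (apply Hpos; lra). apply Hd; lra.
  - intros x Hx. rewrite Rmin_left, Rmax_right in Hx by lra.
    exact (is_derive_continuity_pt _ _ _ (Hd x Hx)).
  - pose proof (Rmax_r (f' c) 0). nra.
Qed.

Lemma is_derive_nonpos_ge f f' a b : a <= b ->
  (forall x, a <= x <= b -> is_derive f x (f' x)) ->
  (forall x, a < x < b -> f' x <= 0) -> f b <= f a.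
Proof.
  intros Hab Hd Hneg.
  enough (- f a <= - f b) by lra.
  apply (is_derive_nonneg_le (fun x => - f x) (fun x => - f' x) a b Hab).
  - intros x Hx. exact (is_derive_opp _ _ _ (Hd x Hx)).
  - intros x Hx. specialize (Hneg x Hx). lra.
Qed.

Lemma is_derive_zero_eq f f' a b : a <= b ->
  (forall x, a <= x <= b -> is_derive f x (f' x)) ->
  (forall x, a < x < b -> f' x = 0) -> f a = f b.
Proof.
  intros Hab Hd Hz. apply Rle_antisym.
  - apply (is_derive_nonneg_le f f'); auto. intros x Hx. rewrite Hz; lra.
  - apply (is_derive_nonpos_ge f f'); auto. intros x Hx. rewrite Hz; lra.
Qed.

Lemma is_derive_pos_lt f f' a b : a < b ->
  (forall x, a <= x <= b -> is_derive f x (f' x)) ->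
  (forall x, a <= x <= b -> 0 < f' x) -> f a < f b.
Proof.
  intros Hab Hd Hpos.
  destruct (MVT_gen f a b f') as [c [Hc Hmvt]].
  - intros x Hx. rewrite Rmin_left, Rmax_right in Hx by lra. apply Hd; lra.
  - intros x Hx. rewrite Rmin_left, Rmax_right in Hx by lra.
    exact (is_derive_continuity_pt _ _ _ (Hd x Hx)).
  - rewrite Rmin_left, Rmax_right in Hc by lra.
    specialize (Hpos c Hc). nra.
Qed.

Lemma is_derive_interior_max f l a b m : is_derive f m l -> a < m < b ->
  (forall y, a < y < b -> f y <= f m) -> l = 0.
Proof.
  intros Hd [Ham Hmb] Hmax.
  exact (deriv_maximum f a b m (exist _ l (proj1 (is_derive_Reals f m l) Hd)) Ham Hmb
           (fun y Hay Hyb => Hmax y (conj Hay Hyb))).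
Qed.

Lemma is_derive_interior_min f l a b m : is_derive f m l -> a < m < b ->
  (forall y, a < y < b -> f m <= f y) -> l = 0.
Proof.
  intros Hd [Ham Hmb] Hmin.
  exact (deriv_minimum f a b m (exist _ l (proj1 (is_derive_Reals f m l) Hd)) Ham Hmb
           (fun y Hay Hyb => Hmin y (conj Hay Hyb))).
Qed.

Lemma is_derive_pos_right f m l : is_derive f m l -> 0 < l ->
  exists del, 0 < del /\ forall y, m < y < m + del -> f m < f y.
Proof.
  intros Hd Hl. apply is_derive_Reals in Hd.
  destruct (Hd l Hl) as [del Hdel]. exists del. split; [apply cond_pos|].
  intros y Hy. specialize (Hdel (y - m) ltac:(lra)).
  rewrite Rabs_right in Hdel by lra. specialize (Hdel ltac:(lra)).
  replace (m + (y - m)) with y in Hdel by ring.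
  apply Rabs_def2 in Hdel.
  assert (Hq : f y - f m = (f y - f m) / (y - m) * (y - m)) by (field; lra).
  nra.
Qed.

Lemma is_derive2_interior_max f f' l a b m :
  (forall x, a < x < b -> is_derive f x (f' x)) -> is_derive f' m l -> a < m < b ->
  (forall y, a < y < b -> f y <= f m) -> f' m = 0 /\ l <= 0.
Proof.
  intros Hd Hd' Hm Hmax.
  assert (Hz : f' m = 0) by exact (is_derive_interior_max f _ a b m (Hd m Hm) Hm Hmax).
  split; [exact Hz|]. apply Rnot_lt_le. intros Hl.
  destruct (is_derive_pos_right f' m l Hd' Hl) as [del [Hdel Hpos]].
  rewrite Hz in Hpos.
  set (h := Rmin del (b - m) / 2).
  assert (Hh : 0 < h /\ h < del /\ h < b - m).
  { unfold h. pose proof (Rmin_l del (b - m)). pose proof (Rmin_r del (b - m)).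
    pose proof (Rmin_pos del (b - m) Hdel ltac:(lra)). lra. }
  assert (f m <= f (m + h / 2)).
  { apply (is_derive_nonneg_le f f'); [lra| |].
    - intros x Hx. apply Hd; lra.
    - intros x Hx. left. apply Hpos; lra. }
  assert (f (m + h / 2) < f (m + h)).
  { apply (is_derive_pos_lt f f'); [lra| |].
    - intros x Hx. apply Hd; lra.
    - intros x Hx. apply Hpos; lra. }
  specialize (Hmax (m + h) ltac:(lra)). lra.
Qed.

Lemma is_derive2_interior_min f f' l a b m :
  (forall x, a < x < b -> is_derive f x (f' x)) -> is_derive f' m l -> a < m < b ->
  (forall y, a < y < b -> f m <= f y) -> f' m = 0 /\ 0 <= l.
Proof.
  intros Hd Hd' Hm Hmin.
  destruct (is_derive2_interior_max (fun x => - f x) (fun x => - f' x) (- l) a b m)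
    as [Hz Hl]; auto.
  - intros x Hx. exact (is_derive_opp _ _ _ (Hd x Hx)).
  - exact (is_derive_opp _ _ _ Hd').
  - intros y Hy. specialize (Hmin y Hy). lra.
  - split; lra.
Qed.

(* Gronwall for the energy [(f^2 + g^2) e^(L x)], with [L] absorbing the coefficients. *)
Lemma ode2_backward_uniqueness (f g g' p r : R -> R) a b Mp Mr : a <= b ->
  (forall x, a <= x <= b -> is_derive f x (g x) /\ is_derive g x (g' x)) ->
  (forall x, a <= x <= b -> g' x = p x * g x + r x) ->
  (forall x, a <= x <= b -> Rabs (p x) <= Mp /\ Rabs (r x) <= Mr * Rabs (f x)) ->
  f b = 0 -> g b = 0 -> forall x, a <= x <= b -> f x = 0 /\ g x = 0.
Proof.
  intros Hab Hd Hode Hbnd Hfb Hgb x Hx.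
  set (L := 2 + 2 * Mp + Mr ^ 2).
  set (E := fun y => (f y ^ 2 + g y ^ 2) * exp (L * y)).
  assert (HE : E x <= E b).
  { apply (is_derive_nonneg_le E
      (fun y => (2 * f y * g y + 2 * g y * g' y + L * (f y ^ 2 + g y ^ 2)) * exp (L * y)));
      [lra| |].
    - intros y Hy. destruct (Hd y ltac:(lra)) as [Hf Hg].
      unfold E. auto_derive.
      + repeat split; eexists; eassumption.
      + replace (Derive (fun x => f x) y) with (g y) by (symmetry; now apply is_derive_unique).
        replace (Derive (fun x => g x) y) with (g' y) by (symmetry; now apply is_derive_unique).
        ring.
    - intros y Hy. apply Rmult_le_pos; [|left; apply exp_pos].
      rewrite Hode by lra. destruct (Hbnd y ltac:(lra)) as [Hp Hr].
      pose proof (Rabs_maj2 (p y)).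
      assert (Hr2 : r y ^ 2 <= Mr ^ 2 * f y ^ 2).
      { rewrite <- (pow2_abs (r y)), <- (pow2_abs (f y)).
        pose proof (Rabs_pos (r y)). nra. }
      pose proof (pow2_ge_0 (f y + g y)). pose proof (pow2_ge_0 (g y + r y)).
      assert (0 <= (p y + Mp) * g y ^ 2) by (apply Rmult_le_pos; [lra|apply pow2_ge_0]).
      assert (0 <= Mp * f y ^ 2) by (apply Rmult_le_pos; [pose proof (Rabs_pos (p y)); lra|apply pow2_ge_0]).
      assert (0 <= Mr ^ 2 * g y ^ 2) by (apply Rmult_le_pos; apply pow2_ge_0).
      unfold L. nra. }
  unfold E in HE. rewrite Hfb, Hgb in HE.
  pose proof (exp_pos (L * x)). pose proof (pow2_ge_0 (f x)). pose proof (pow2_ge_0 (g x)).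
  assert (Hf0 : f x ^ 2 = 0) by nra. assert (Hg0 : g x ^ 2 = 0) by nra.
  split; [apply (Rsqr_0_uniq (f x))|apply (Rsqr_0_uniq (g x))]; unfold Rsqr; lra.
Qed.

(** * Equations [f'' = p f' - q F] on (0, 1) with [q > 0] *)

(* The common shape of the [y2]-, [y3]- and [(y2 + y3)]-equations. *)
Record forced_ode (f f' f'' p q F : R -> R) : Prop := {
  forced_ode_derive : forall x, is_derive f x (f' x);
  forced_ode_derive2 : forall x, is_derive f' x (f'' x);
  forced_ode_eq : forall x, 0 < x < 1 -> f'' x = p x * f' x - q x * F x;
  forced_ode_q_pos : forall x, 0 < x < 1 -> 0 < q x;
  forced_ode_p_cont : forall x, 0 < x < 1 -> continuity_pt p x;
  forced_ode_q_cont : forall x, 0 < x < 1 -> continuity_pt q x;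
  forced_ode_lipschitz : exists c, (forall x, 0 < x < 1 -> continuity_pt c x) /\
    forall x, 0 < x < 1 -> Rabs (F x) <= c x * Rabs (f x) }.

Lemma forced_ode_opp f f' f'' p q F : forced_ode f f' f'' p q F ->
  forced_ode (fun x => - f x) (fun x => - f' x) (fun x => - f'' x) p q (fun x => - F x).
Proof.
  intros [Hd Hd2 Heq Hq Hp Hqc [c [Hc Hb]]]. split; auto.
  - intros x. exact (is_derive_opp _ _ _ (Hd x)).
  - intros x. exact (is_derive_opp _ _ _ (Hd2 x)).
  - intros x Hx. rewrite Heq by exact Hx. ring.
  - exists c. split; [exact Hc|]. intros x Hx. rewrite !Rabs_Ropp. auto.
Qed.

Section ForcedOde.
Variables f f' f'' p q F : R -> R.
Hypothesis Hfo : forced_ode f f' f'' p q F.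

Lemma forced_ode_backward_uniqueness x0 : 0 < x0 < 1 -> f x0 = 0 -> f' x0 = 0 ->
  forall x, 0 < x <= x0 -> f x = 0 /\ f' x = 0.
Proof.
  destruct Hfo as [Hd Hd2 Heq Hq Hp Hqc [c [Hc Hb]]].
  intros Hx0 Hf0 Hf'0 x Hx.
  destruct (continuity_bounded_segment p x x0) as [Mp HMp]; [lra|intros; apply Hp; lra|].
  destruct (continuity_bounded_segment (fun y => q y * c y) x x0) as [Mr HMr]; [lra| |].
  { intros y Hy. apply continuity_pt_mult; [apply Hqc|apply Hc]; lra. }
  apply (ode2_backward_uniqueness f f' f'' p (fun y => - (q y * F y)) x x0 Mp Mr);
    auto; [lra| | |lra].
  - intros y Hy. rewrite Heq by lra. ring.
  - intros y Hy. split; [apply HMp; exact Hy|].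
    rewrite Rabs_Ropp, Rabs_mult, (Rabs_right (q y)) by (left; apply Hq; lra).
    apply Rle_trans with (q y * c y * Rabs (f y)).
    + rewrite Rmult_assoc. apply Rmult_le_compat_l; [left; apply Hq|apply Hb]; lra.
    + apply Rmult_le_compat_r; [apply Rabs_pos|].
      apply Rle_trans with (2 := HMr y Hy). apply Rle_abs.
Qed.

(* At an interior maximum [f' = 0] and [f'' <= 0], so the equation forces [F >= 0]. *)
Lemma forced_ode_force_nonneg_at_max lo hi m : 0 <= lo -> hi <= 1 -> lo < m < hi ->
  (forall x, lo < x < hi -> f x <= f m) -> 0 <= F m.
Proof.
  destruct Hfo as [Hd Hd2 Heq Hq _ _ _].
  intros Hlo Hhi Hm Hmax.
  destruct (is_derive2_interior_max f f' (f'' m) lo hi m (fun x _ => Hd x) (Hd2 m) Hm Hmax)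
    as [Hz Hneg].
  rewrite Heq, Hz in Hneg by lra. specialize (Hq m ltac:(lra)). nra.
Qed.

Lemma forced_ode_force_nonpos_at_min lo hi m : 0 <= lo -> hi <= 1 -> lo < m < hi ->
  (forall x, lo < x < hi -> f m <= f x) -> F m <= 0.
Proof.
  destruct Hfo as [Hd Hd2 Heq Hq _ _ _].
  intros Hlo Hhi Hm Hmin.
  destruct (is_derive2_interior_min f f' (f'' m) lo hi m (fun x _ => Hd x) (Hd2 m) Hm Hmin)
    as [Hz Hpos].
  rewrite Heq, Hz in Hpos by lra. specialize (Hq m ltac:(lra)). nra.
Qed.

Lemma forced_ode_continuity_pt x : continuity_pt f x.
Proof. exact (is_derive_continuity_pt _ _ _ (forced_ode_derive _ _ _ _ _ _ Hfo x)). Qed.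

Lemma forced_ode_max_principle : f 0 <= 0 -> f 1 <= 0 ->
  (forall x, 0 < x < 1 -> 0 < f x -> F x < 0) -> forall x, 0 <= x <= 1 -> f x <= 0.
Proof.
  intros Hf0 Hf1 HF.
  destruct (continuity_ab_maj f 0 1) as [m [Hmax Hm]];
    [lra|intros; apply forced_ode_continuity_pt|].
  intros x Hx. apply Rle_trans with (f m); [exact (Hmax x Hx)|].
  apply Rnot_lt_le. intros Hpos.
  assert (Hm' : 0 < m < 1) by (destruct Hm as [[ | <-] [ | ->]]; lra).
  pose proof (HF m Hm' Hpos).
  enough (0 <= F m) by lra.
  apply (forced_ode_force_nonneg_at_max 0 1 m); try lra.
  intros y Hy. apply Hmax. lra.
Qed.

Lemma forced_ode_derive_nonneg : (forall x, 0 <= x <= 1 -> f x <= 0) -> f 1 = 0 ->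
  (forall x, 0 < x < 1 -> f x < 0 -> 0 < F x) -> forall x, 0 < x < 1 -> 0 <= f' x.
Proof.
  intros Hle Hf1 HF x Hx. apply Rnot_lt_le. intros Hneg.
  destruct (is_derive_pos_right (fun y => - f y) x (- f' x)) as [del [Hdel Hdec]];
    [exact (is_derive_opp _ _ _ (forced_ode_derive _ _ _ _ _ _ Hfo x))|lra|].
  set (y := x + Rmin del (1 - x) / 2).
  assert (Hy : x < y < x + del /\ y < 1).
  { unfold y. pose proof (Rmin_l del (1 - x)). pose proof (Rmin_r del (1 - x)).
    pose proof (Rmin_pos del (1 - x) Hdel ltac:(lra)). lra. }
  specialize (Hdec y ltac:(lra)).
  destruct (continuity_ab_min f x 1) as [m [Hmin Hm]];
    [lra|intros; apply forced_ode_continuity_pt|].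
  specialize (Hmin y ltac:(lra)) as Hmy.
  pose proof (Hle x ltac:(lra)).
  assert (Hm' : x < m < 1) by (destruct Hm as [[ | <-] [ | ->]]; lra).
  pose proof (HF m ltac:(lra) ltac:(lra)).
  enough (F m <= 0) by lra.
  apply (forced_ode_force_nonpos_at_min x 1 m); try lra.
  intros z Hz. apply Hmin. lra.
Qed.

Lemma forced_ode_derive_pos_of_nonpos : (forall x, 0 <= x <= 1 -> f x <= 0) ->
  f 0 < 0 -> f 1 = 0 -> (forall x, 0 < x < 1 -> f x < 0 -> 0 < F x) ->
  forall x, 0 < x < 1 -> 0 < f' x.
Proof.
  intros Hle Hf0 Hf1 HF.
  pose proof (forced_ode_derive_nonneg Hle Hf1 HF) as Hnn.
  intros x Hx. destruct (Hnn x Hx) as [|Hz]; [assumption|exfalso].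
  destruct (Hle x ltac:(lra)) as [Hfx|Hfx].
  - (* [f'] is minimal at [x], so [f'' x = 0] and the equation contradicts [F x > 0] *)
    destruct Hfo as [_ Hd2 Heq Hq _ _ _].
    assert (Hz2 : f'' x = 0).
    { apply (is_derive_interior_min f' (f'' x) 0 1 x (Hd2 x) Hx).
      intros y Hy. rewrite <- Hz. apply Hnn. exact Hy. }
    rewrite Heq, <- Hz in Hz2 by exact Hx.
    pose proof (Hq x Hx). pose proof (HF x Hx Hfx). nra.
  - (* otherwise [f] vanishes on [(0, x]], against [f 0 < 0] and continuity at [0] *)
    destruct (continuous_neq_0 f 0 (forced_ode_continuity_pt 0) ltac:(lra)) as [eps Heps].
    set (h := Rmin eps x / 2).
    assert (Hh : 0 < h <= x /\ h < eps).
    { unfold h. pose proof (Rmin_l eps x). pose proof (Rmin_r eps x).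
      pose proof (Rmin_pos eps x (cond_pos eps) ltac:(lra)). lra. }
    apply (Heps h); [rewrite Rabs_right; lra|].
    rewrite Rplus_0_l.
    exact (proj1 (forced_ode_backward_uniqueness x Hx Hfx (eq_sym Hz) h (proj1 Hh))).
Qed.

Lemma forced_ode_derive_pos : f 0 < 0 -> f 1 = 0 ->
  (forall x, 0 < x < 1 -> f x < 0 -> 0 < F x) ->
  (forall x, 0 < x < 1 -> 0 < f x -> F x < 0) ->
  forall x, 0 < x < 1 -> 0 < f' x.
Proof.
  intros Hf0 Hf1 Hneg Hpos.
  apply forced_ode_derive_pos_of_nonpos; auto.
  apply forced_ode_max_principle; auto; lra.
Qed.

End ForcedOde.

(** * The forces of the [y2]- and [y3]-equations *)

(* The brackets of eq3 and eq4 in the variables [s = ln phi1], [t = ln phi2]. *)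
Definition force2 s t := exp (2/3 * s) * exp (1/3 * t) - exp (-1/3 * s) * exp (1/3 * t)
  - exp (2/3 * s) * exp (-2/3 * t) + exp (-4/3 * s) * exp (-2/3 * t).
Definition force3 s t := exp (-1/3 * s) * exp (1/3 * t) - exp (-1/3 * s) * exp (-2/3 * t)
  - exp (2/3 * s) * exp (4/3 * t) + exp (2/3 * s) * exp (-2/3 * t).

Lemma exp_thirds (n : Z) a : exp (IZR n / 3 * a) = powerRZ (exp (a / 3)) n.
Proof.
  rewrite powerRZ_Rpower by apply exp_pos. unfold Rpower. rewrite ln_exp.
  f_equal. field.
Qed.

Lemma exp_cube_third a : exp a = exp (a / 3) ^ 3.
Proof. replace a with (a / 3 + a / 3 + a / 3) at 1 by field. rewrite !exp_plus. ring. Qed.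

(* In [u = e^(s/3)], [v = e^(t/3)] these identities are rational-function identities. *)
Ltac exp_thirds_field s t :=
  rewrite (exp_cube_third s), (exp_cube_third t), !exp_thirds; simpl;
  field; split; apply Rgt_not_eq, exp_pos.

Lemma force2_factor s t : force2 s t =
  exp (-4/3 * s) * exp (-2/3 * t) * (1 - exp s) * (1 + exp s - exp s * exp t).
Proof. unfold force2. exp_thirds_field s t. Qed.

Lemma force3_factor s t : force3 s t =
  exp (-1/3 * s) * exp (-2/3 * t) * (exp t - 1) * (1 - exp s - exp s * exp t).
Proof. unfold force3. exp_thirds_field s t. Qed.

Lemma force23_factor s t : force2 s t + force3 s t =
  exp (-4/3 * s) * exp (-2/3 * t) * (1 - exp s * exp t) * (1 + exp s * exp t - exp s).
Proof. unfold force2, force3. exp_thirds_field s t. Qed.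

Lemma exp_lt_1 x : x < 0 -> exp x < 1.
Proof. intros Hx. rewrite <- exp_0. exact (exp_increasing _ _ Hx). Qed.

Lemma exp_le_1 x : x <= 0 -> exp x <= 1.
Proof. intros [Hx| ->]; [left; apply exp_lt_1|rewrite exp_0]; lra. Qed.

Lemma exp_gt_1 x : 0 < x -> 1 < exp x.
Proof. intros Hx. rewrite <- exp_0. exact (exp_increasing _ _ Hx). Qed.

Lemma exp_ge_1 x : 0 <= x -> 1 <= exp x.
Proof. intros Hx. pose proof (exp_ineq1_le x). lra. Qed.

Lemma force2_pos s t : s < 0 -> s + t <= 0 -> 0 < force2 s t.
Proof.
  intros Hs Hst. rewrite force2_factor, <- (exp_plus s t).
  pose proof (exp_lt_1 s Hs). pose proof (exp_le_1 _ Hst). pose proof (exp_pos s).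
  pose proof (exp_pos (-4/3 * s)). pose proof (exp_pos (-2/3 * t)).
  repeat apply Rmult_lt_0_compat; lra.
Qed.

Lemma force2_neg s t : 0 < s -> t <= 0 -> force2 s t < 0.
Proof.
  intros Hs Ht. rewrite force2_factor.
  pose proof (exp_gt_1 s Hs). pose proof (exp_le_1 t Ht). pose proof (exp_pos s).
  pose proof (exp_pos (-4/3 * s)). pose proof (exp_pos (-2/3 * t)).
  assert (exp s * exp t <= exp s) by nra.
  enough (0 < exp (-4/3 * s) * exp (-2/3 * t) * (exp s - 1) * (1 + exp s - exp s * exp t))
    by nra.
  repeat apply Rmult_lt_0_compat; lra.
Qed.

Lemma force3_pos s t : t < 0 -> 1 < exp s + exp s * exp t -> 0 < force3 s t.
Proof.
  intros Ht Hst. rewrite force3_factor.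
  pose proof (exp_lt_1 t Ht). pose proof (exp_pos (-1/3 * s)). pose proof (exp_pos (-2/3 * t)).
  enough (0 < exp (-1/3 * s) * exp (-2/3 * t) * (1 - exp t) * (exp s + exp s * exp t - 1))
    by nra.
  repeat apply Rmult_lt_0_compat; lra.
Qed.

Lemma force3_neg s t : 0 < t -> 1 < exp s + exp s * exp t -> force3 s t < 0.
Proof.
  intros Ht Hst. rewrite force3_factor.
  pose proof (exp_gt_1 t Ht). pose proof (exp_pos (-1/3 * s)). pose proof (exp_pos (-2/3 * t)).
  enough (0 < exp (-1/3 * s) * exp (-2/3 * t) * (exp t - 1) * (exp s + exp s * exp t - 1))
    by nra.
  repeat apply Rmult_lt_0_compat; lra.
Qed.

Lemma force23_pos s t : s + t < 0 -> s <= 0 -> 0 < force2 s t + force3 s t.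
Proof.
  intros Hst Hs. rewrite force23_factor, <- (exp_plus s t).
  pose proof (exp_lt_1 _ Hst). pose proof (exp_le_1 s Hs). pose proof (exp_pos (s + t)).
  pose proof (exp_pos (-4/3 * s)). pose proof (exp_pos (-2/3 * t)).
  repeat apply Rmult_lt_0_compat; lra.
Qed.

Lemma force23_neg s t : 0 < s + t -> 0 <= t -> force2 s t + force3 s t < 0.
Proof.
  intros Hst Ht. rewrite force23_factor, <- (exp_plus s t).
  pose proof (exp_gt_1 _ Hst). pose proof (exp_ge_1 t Ht). pose proof (exp_pos s).
  pose proof (exp_pos (-4/3 * s)). pose proof (exp_pos (-2/3 * t)).
  assert (exp s <= exp (s + t)) by (rewrite exp_plus; nra).
  enough (0 < exp (-4/3 * s) * exp (-2/3 * t) * (exp (s + t) - 1) * (1 + exp (s + t) - exp s))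
    by nra.
  repeat apply Rmult_lt_0_compat; lra.
Qed.

Lemma Rabs_exp_sub_exp a b : Rabs (exp a - exp b) <= (exp a + exp b) * Rabs (a - b).
Proof.
  assert (Hle : forall u v, u <= v -> 0 <= exp v - exp u <= exp v * (v - u)).
  { intros u v Huv. pose proof (exp_ineq1_le (u - v)). pose proof (exp_pos v).
    replace (exp u) with (exp v * exp (u - v)) by (rewrite <- exp_plus; f_equal; ring).
    split; [|nra]. pose proof (exp_le_1 (u - v) ltac:(lra)). nra. }
  pose proof (exp_pos a). pose proof (exp_pos b).
  destruct (Rle_dec a b) as [Hab|Hab].
  - specialize (Hle a b Hab).
    rewrite Rabs_left1, (Rabs_left1 (a - b)) by lra. nra.
  - specialize (Hle b a ltac:(lra)).
    rewrite Rabs_right, (Rabs_right (a - b)) by lra. nra.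
Qed.

Lemma exp_dipole_bound X a b c d u : X = exp a - exp b + (exp c - exp d) ->
  a - b = u -> c - d = - (2 * u) ->
  Rabs X <= (exp a + exp b + 2 * (exp c + exp d)) * Rabs u.
Proof.
  intros -> Hab Hcd.
  pose proof (Rabs_exp_sub_exp a b) as Hab'. pose proof (Rabs_exp_sub_exp c d) as Hcd'.
  rewrite Hab in Hab'. rewrite Hcd, Rabs_Ropp, Rabs_mult, (Rabs_right 2) in Hcd' by lra.
  pose proof (Rabs_triang (exp a - exp b) (exp c - exp d)). lra.
Qed.

Lemma force2_bound s t : Rabs (force2 s t) <=
  (exp (2/3 * s + 1/3 * t) + exp (-1/3 * s + 1/3 * t)
   + 2 * (exp (-4/3 * s + -2/3 * t) + exp (2/3 * s + -2/3 * t))) * Rabs s.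
Proof. apply exp_dipole_bound; [unfold force2; rewrite <- !exp_plus; ring|field|field]. Qed.

Lemma force3_bound s t : Rabs (force3 s t) <=
  (exp (-1/3 * s + 1/3 * t) + exp (-1/3 * s + -2/3 * t)
   + 2 * (exp (2/3 * s + -2/3 * t) + exp (2/3 * s + 4/3 * t))) * Rabs t.
Proof. apply exp_dipole_bound; [unfold force3; rewrite <- !exp_plus; ring|field|field]. Qed.

Lemma force23_bound s t : Rabs (force2 s t + force3 s t) <=
  (exp (2/3 * s + 1/3 * t) + exp (-1/3 * s + -2/3 * t)
   + 2 * (exp (-4/3 * s + -2/3 * t) + exp (2/3 * s + 4/3 * t))) * Rabs (s + t).
Proof. apply exp_dipole_bound; [unfold force2, force3; rewrite <- !exp_plus; ring|field|field]. Qed.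

(** * The system for the squashing factors *)

Definition C2 (f : R -> R) := forall x, ex_derive f x /\ ex_derive (Derive f) x.

Lemma smooth_C2 f : smooth f -> C2 f.
Proof. intros Hf x. exact (conj (Hf 1%nat x) (Hf 2%nat x)). Qed.

Lemma is_derive_C2 f : C2 f -> forall x,
  is_derive f x (Derive f x) /\ is_derive (Derive f) x (Derive (Derive f) x).
Proof. intros Hf x. split; apply Derive_correct; apply Hf. Qed.

Lemma C2_ext f g : (forall x, f x = g x) -> C2 f -> C2 g.
Proof.
  intros E Hf x. destruct (Hf x) as [H1 H2]. split.
  - exact (ex_derive_ext f g x E H1).
  - exact (ex_derive_ext (Derive f) (Derive g) x (fun y => Derive_ext f g y E) H2).
Qed.

Lemma C2_plus f g : C2 f -> C2 g -> C2 (fun x => f x + g x).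
Proof.
  intros Hf Hg x. split.
  - apply (ex_derive_plus f g); [apply Hf|apply Hg].
  - apply (ex_derive_ext (fun y => Derive f y + Derive g y)).
    + intros y. symmetry. apply Derive_plus; [apply Hf|apply Hg].
    + apply (ex_derive_plus (Derive f) (Derive g)); [apply Hf|apply Hg].
Qed.

Lemma C2_opp f : C2 f -> C2 (fun x => - f x).
Proof.
  intros Hf x. split.
  - apply (ex_derive_opp f). apply Hf.
  - apply (ex_derive_ext (fun y => - Derive f y)).
    + intros y. symmetry. apply Derive_opp.
    + apply (ex_derive_opp (Derive f)). apply Hf.
Qed.

Lemma C2_ln f : C2 f -> (forall x, 0 < f x) -> C2 (fun x => ln (f x)).
Proof.
  intros Hf Hpos x. split.
  - auto_derive. repeat split; [apply Hf|exact (Hpos x)].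
  - apply (ex_derive_ext (fun y => Derive f y / f y)).
    + intros y. symmetry. apply is_derive_unique. auto_derive.
      * repeat split; [apply Hf|exact (Hpos y)].
      * rewrite Rmult_1_l. reflexivity.
    + auto_derive. repeat split; try apply Hf. apply Rgt_not_eq, Hpos.
Qed.

Section SquashingFactors.
Variables I1 I2 I3 : R -> R.
Hypotheses (HI1 : smooth I1) (HI2 : smooth I2) (HI3 : smooth I3).
Hypotheses (PI1 : forall x, 0 < I1 x) (PI2 : forall x, 0 < I2 x) (PI3 : forall x, 0 < I3 x).
Hypothesis Hode : forall x, 0 < x < 1 ->
  eq1 I1 I2 I3 x /\ eq2 I1 I2 I3 x /\ eq3 I1 I2 I3 x /\ eq4 I1 I2 I3 x.

Local Notation k := (y1 I1 I2 I3).
Local Notation s := (y2 I1 I2).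
Local Notation t := (y3 I2 I3).

Lemma C2_y1 : C2 k.
Proof.
  apply (C2_ext (fun x => ln (I1 x) + ln (I2 x) + ln (I3 x))).
  - intros x. unfold y1, KK. rewrite !ln_mult; auto. apply Rmult_lt_0_compat; auto.
  - apply C2_plus; [apply C2_plus|]; apply C2_ln; auto; apply smooth_C2; auto.
Qed.

Lemma C2_y2 : C2 s.
Proof.
  apply (C2_ext (fun x => ln (I2 x) + - ln (I1 x))).
  - intros x. unfold y2, phi1. rewrite ln_div; auto.
  - apply C2_plus; [|apply C2_opp]; apply C2_ln; auto; apply smooth_C2; auto.
Qed.

Lemma C2_y3 : C2 t.
Proof.
  apply (C2_ext (fun x => ln (I3 x) + - ln (I2 x))).
  - intros x. unfold y3, phi2. rewrite ln_div; auto.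
  - apply C2_plus; [|apply C2_opp]; apply C2_ln; auto; apply smooth_C2; auto.
Qed.

Definition alpha x := 2 * / x * (1 + 2 * x ^ 2) / (1 - x ^ 2) - 1/2 * Derive k x.
Definition beta x := 32 / (1 - x ^ 2) ^ 2 * exp (-1/3 * k x).
Definition quad23 x := Derive s x ^ 2 + Derive s x * Derive t x + Derive t x ^ 2.

Lemma y1_ode x : 0 < x < 1 -> Derive (Derive k) x =
  / x * (1 + 3 * x ^ 2) / (1 - x ^ 2) * Derive k x - 1/6 * Derive k x ^ 2 - 1/3 * quad23 x.
Proof. intros Hx. destruct (Hode x Hx) as [H _]. unfold eq1 in H. unfold quad23. lra. Qed.

Lemma y2_ode x : 0 < x < 1 ->
  Derive (Derive s) x = alpha x * Derive s x - beta x * force2 (s x) (t x).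
Proof.
  intros Hx. destruct (Hode x Hx) as [_ [_ [H _]]]. unfold eq3, Rpower in H. cbv zeta in H.
  change (ln (KK I1 I2 I3 x)) with (k x) in H.
  change (ln (phi1 I1 I2 x)) with (s x) in H. change (ln (phi2 I2 I3 x)) with (t x) in H.
  unfold alpha, beta, force2. lra.
Qed.

Lemma y3_ode x : 0 < x < 1 ->
  Derive (Derive t) x = alpha x * Derive t x - beta x * force3 (s x) (t x).
Proof.
  intros Hx. destruct (Hode x Hx) as [_ [_ [_ H]]]. unfold eq4, Rpower in H. cbv zeta in H.
  change (ln (KK I1 I2 I3 x)) with (k x) in H.
  change (ln (phi1 I1 I2 x)) with (s x) in H. change (ln (phi2 I2 I3 x)) with (t x) in H.
  unfold alpha, beta, force3. lra.
Qed.

Lemma forced_ode_intro f f' f'' F :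
  (forall x, is_derive f x (f' x)) -> (forall x, is_derive f' x (f'' x)) ->
  (forall x, 0 < x < 1 -> f'' x = alpha x * f' x - beta x * F x) ->
  (exists c, (forall x, 0 < x < 1 -> continuity_pt c x) /\
     forall x, 0 < x < 1 -> Rabs (F x) <= c x * Rabs (f x)) ->
  forced_ode f f' f'' alpha beta F.
Proof.
  intros Hd Hd2 Heq Hlip. split; auto.
  - intros x Hx. unfold beta. apply Rmult_lt_0_compat; [|apply exp_pos].
    apply Rdiv_lt_0_compat; [lra|apply pow_lt; nra].
  - intros x Hx. apply ex_derive_continuity_pt. unfold alpha. auto_derive.
    repeat split; try apply C2_y1; nra.
  - intros x Hx. apply ex_derive_continuity_pt. unfold beta. auto_derive.
    repeat split; try apply C2_y1.
    assert (0 < 1 - x * x) by nra. apply Rgt_not_eq. nra.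
Qed.

Lemma forced_ode_y2 :
  forced_ode s (Derive s) (Derive (Derive s)) alpha beta (fun x => force2 (s x) (t x)).
Proof.
  apply forced_ode_intro; try apply is_derive_C2, C2_y2; [exact y2_ode|].
  eexists. split; [|intros x _; apply force2_bound].
  intros x _. apply ex_derive_continuity_pt. auto_derive.
  repeat split; try apply C2_y2; apply C2_y3.
Qed.

Lemma forced_ode_y3 :
  forced_ode t (Derive t) (Derive (Derive t)) alpha beta (fun x => force3 (s x) (t x)).
Proof.
  apply forced_ode_intro; try apply is_derive_C2, C2_y3; [exact y3_ode|].
  eexists. split; [|intros x _; apply force3_bound].
  intros x _. apply ex_derive_continuity_pt. auto_derive.
  repeat split; try apply C2_y2; apply C2_y3.
Qed.

Lemma forced_ode_y23 :
  forced_ode (fun x => s x + t x) (fun x => Derive s x + Derive t x)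
    (fun x => Derive (Derive s) x + Derive (Derive t) x) alpha beta
    (fun x => force2 (s x) (t x) + force3 (s x) (t x)).
Proof.
  apply forced_ode_intro.
  - intros x. exact (is_derive_plus s t _ _ _
      (proj1 (is_derive_C2 _ C2_y2 x)) (proj1 (is_derive_C2 _ C2_y3 x))).
  - intros x. exact (is_derive_plus (Derive s) (Derive t) _ _ _
      (proj2 (is_derive_C2 _ C2_y2 x)) (proj2 (is_derive_C2 _ C2_y3 x))).
  - intros x Hx. cbv beta. rewrite y2_ode, y3_ode by exact Hx. lra.
  - eexists. split; [|intros x _; apply force23_bound].
    intros x _. apply ex_derive_continuity_pt. auto_derive.
    repeat split; try apply C2_y2; apply C2_y3.
Qed.

Lemma quad23_nonneg x : 0 <= quad23 x.
Proof. unfold quad23. nra. Qed.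

Lemma quad23_eq0 x : quad23 x = 0 -> Derive s x = 0 /\ Derive t x = 0.
Proof.
  unfold quad23. intros H.
  pose proof (pow2_ge_0 (2 * Derive s x + Derive t x)).
  pose proof (pow2_ge_0 (Derive s x + 2 * Derive t x)).
  assert (Hs2 : Derive s x ^ 2 = 0) by nra. assert (Ht2 : Derive t x ^ 2 = 0) by nra.
  split; [apply (Rsqr_0_uniq (Derive s x))|apply (Rsqr_0_uniq (Derive t x))];
    unfold Rsqr; lra.
Qed.

(* [eq1] makes this weighting of [y1'] nonincreasing; it vanishes at [x = 1]. *)
Definition y1_flux x := Derive k x * ((1 - x ^ 2) ^ 2 / x).

Lemma is_derive_y1_flux x : 0 < x -> is_derive y1_flux x
  (Derive (Derive k) x * ((1 - x ^ 2) ^ 2 / x)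
   - Derive k x * ((1 - x ^ 2) * (1 + 3 * x ^ 2) / x ^ 2)).
Proof.
  intros Hx. unfold y1_flux. auto_derive.
  - repeat split; [apply C2_y1|lra].
  - change (Derive (fun y => Derive k y) x) with (Derive (Derive k) x). field. lra.
Qed.

Lemma y1_flux_nonincreasing a b : 0 < a <= b -> b <= 1 -> y1_flux b <= y1_flux a.
Proof.
  intros Ha Hb.
  eapply (is_derive_nonpos_ge y1_flux); [lra|intros x Hx; apply is_derive_y1_flux; lra|].
  intros x Hx. cbv beta. rewrite y1_ode by lra.
  assert (Hw : 0 < (1 - x ^ 2) ^ 2 / x) by (apply Rdiv_lt_0_compat; [apply pow_lt; nra|lra]).
  replace (_ - _) with (- ((1 - x ^ 2) ^ 2 / x)
                       * (1/6 * Derive k x ^ 2 + 1/3 * quad23 x)) by (field; nra).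
  pose proof (quad23_nonneg x). pose proof (pow2_ge_0 (Derive k x)). nra.
Qed.

Lemma flux_weight_pos x : 0 < x < 1 -> 0 < (1 - x ^ 2) ^ 2 / x.
Proof. intros Hx. apply Rdiv_lt_0_compat; [apply pow_lt; nra|lra]. Qed.

Lemma Derive_y1_nonneg x : 0 < x < 1 -> 0 <= Derive k x.
Proof.
  intros Hx. pose proof (y1_flux_nonincreasing x 1 ltac:(lra) ltac:(lra)) as Hflux.
  unfold y1_flux in Hflux. pose proof (flux_weight_pos x Hx).
  replace ((1 - 1 ^ 2) ^ 2 / 1) with 0 in Hflux by field. nra.
Qed.

Lemma Derive_y1_zero_right x0 : 0 < x0 < 1 -> Derive k x0 = 0 ->
  forall x, x0 <= x < 1 -> Derive k x = 0.
Proof.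
  intros Hx0 Hz x Hx.
  pose proof (y1_flux_nonincreasing x0 x ltac:(lra) ltac:(lra)) as Hflux.
  unfold y1_flux in Hflux. rewrite Hz in Hflux.
  pose proof (Derive_y1_nonneg x ltac:(lra)). pose proof (flux_weight_pos x ltac:(lra)). nra.
Qed.

Lemma Derive_y23_zero_of_Derive_y1_zero x : 0 < x < 1 -> Derive k x = 0 ->
  Derive s x = 0 /\ Derive t x = 0.
Proof.
  intros Hx Hz. apply quad23_eq0.
  assert (Hz2 : Derive (Derive k) x = 0).
  { apply (is_derive_interior_min (Derive k) _ 0 1 x (proj2 (is_derive_C2 _ C2_y1 x)) Hx).
    intros y Hy. rewrite Hz. exact (Derive_y1_nonneg y Hy). }
  rewrite y1_ode, Hz in Hz2 by exact Hx. pose proof (quad23_nonneg x). nra.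
Qed.

Lemma Derive_y1_zero_left x0 : 0 < x0 < 1 -> Derive k x0 = 0 ->
  (forall x, 0 < x <= x0 -> quad23 x = 0) -> forall x, 0 < x <= x0 -> Derive k x = 0.
Proof.
  intros Hx0 Hz Hq x Hx.
  set (p y := / y * (1 + 3 * y ^ 2) / (1 - y ^ 2) - 1/6 * Derive k y).
  destruct (continuity_bounded_segment p x x0) as [Mp HMp]; [lra| |].
  { intros y Hy. apply ex_derive_continuity_pt. unfold p. auto_derive.
    repeat split; try apply C2_y1; nra. }
  (* [eq1] is linear in [y1'] once [quad23 = 0]: apply uniqueness to [y1 - y1 x0] *)
  refine (proj2 (ode2_backward_uniqueness (fun y => k y - k x0) (Derive k) (Derive (Derive k))
                   p (fun _ => 0) x x0 Mp 0 _ _ _ _ _ Hz x _)); try lra.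
  - intros y Hy. split; [|apply is_derive_C2, C2_y1].
    rewrite <- (Rminus_0_r (Derive k y)).
    apply (is_derive_minus k (fun _ => k x0)); [apply is_derive_C2, C2_y1|exact (is_derive_const (k x0) y)].
  - intros y Hy. rewrite y1_ode, Hq by lra. unfold p. ring.
  - intros y Hy. split; [exact (HMp y Hy)|]. rewrite Rabs_R0. lra.
Qed.

Lemma Derive_y1_pos : KK I1 I2 I3 0 < 1 -> KK I1 I2 I3 1 = 1 ->
  phi1 I1 I2 1 = 1 -> phi2 I2 I3 1 = 1 -> forall x, 0 < x < 1 -> 0 < Derive k x.
Proof.
  intros HK0 HK1 Hp1 Hq1 x0 Hx0.
  destruct (Derive_y1_nonneg x0 Hx0) as [|Hz]; [assumption|exfalso]. symmetry in Hz.
  pose proof (Derive_y1_zero_right x0 Hx0 Hz) as Hright.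
  assert (Hst : forall x, x0 <= x < 1 -> Derive s x = 0 /\ Derive t x = 0)
    by (intros x Hx; apply Derive_y23_zero_of_Derive_y1_zero; [lra|auto]).
  assert (Hs0 : s x0 = 0).
  { transitivity (s 1); [|unfold y2; rewrite Hp1; apply ln_1].
    apply (is_derive_zero_eq s (Derive s)); [lra|intros; apply is_derive_C2, C2_y2|].
    intros x Hx. apply Hst. lra. }
  assert (Ht0 : t x0 = 0).
  { transitivity (t 1); [|unfold y3; rewrite Hq1; apply ln_1].
    apply (is_derive_zero_eq t (Derive t)); [lra|intros; apply is_derive_C2, C2_y3|].
    intros x Hx. apply Hst. lra. }
  destruct (Hst x0 ltac:(lra)) as [Hs'0 Ht'0].
  assert (Hleft : forall x, 0 < x <= x0 -> Derive k x = 0).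
  { apply (Derive_y1_zero_left x0 Hx0 Hz). intros x Hx. unfold quad23.
    rewrite (proj2 (forced_ode_backward_uniqueness _ _ _ _ _ _ forced_ode_y2 x0 Hx0 Hs0 Hs'0 x Hx)),
      (proj2 (forced_ode_backward_uniqueness _ _ _ _ _ _ forced_ode_y3 x0 Hx0 Ht0 Ht'0 x Hx)).
    ring. }
  assert (Hk : k 0 = k 1).
  { apply (is_derive_zero_eq k (Derive k)); [lra|intros; apply is_derive_C2, C2_y1|].
    intros x Hx. destruct (Rle_lt_dec x x0); [apply Hleft|apply Hright]; lra. }
  assert (HKpos : 0 < KK I1 I2 I3 0) by (unfold KK; repeat apply Rmult_lt_0_compat; auto).
  unfold y1 in Hk. rewrite HK1, ln_1 in Hk.
  rewrite <- (exp_ln _ HKpos), Hk, exp_0 in HK0. lra.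
Qed.

Lemma y2_y23_nonpos : s 0 < 0 -> s 0 + t 0 < 0 -> s 1 = 0 -> t 1 = 0 ->
  forall x, 0 <= x <= 1 -> s x <= 0 /\ s x + t x <= 0.
Proof.
  intros Hs0 Hst0 Hs1 Ht1.
  destruct (continuity_ab_maj s 0 1) as [m1 [Hmax1 Hm1]];
    [lra|intros; exact (forced_ode_continuity_pt _ _ _ _ _ _ forced_ode_y2 _)|].
  destruct (continuity_ab_maj (fun x => s x + t x) 0 1) as [m2 [Hmax2 Hm2]];
    [lra|intros; exact (forced_ode_continuity_pt _ _ _ _ _ _ forced_ode_y23 _)|].
  enough (s m1 <= 0 /\ s m2 + t m2 <= 0) as [H1 H2].
  { intros x Hx. specialize (Hmax1 x Hx). specialize (Hmax2 x Hx). lra. }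
  (* the larger of the two maxima, if positive, is attained inside, where its force has the
     wrong sign *)
  destruct (Rle_dec (s m1) (s m2 + t m2)) as [Hle|Hlt].
  - enough (s m2 + t m2 <= 0) by lra. apply Rnot_lt_le. intros Hpos.
    assert (Hm2' : 0 < m2 < 1) by (destruct Hm2 as [[ | <-] [ | ->]]; lra).
    pose proof (forced_ode_force_nonneg_at_max _ _ _ _ _ _ forced_ode_y23 0 1 m2
                  ltac:(lra) ltac:(lra) Hm2' (fun x Hx => Hmax2 x ltac:(lra))).
    assert (s m2 <= s m1) by (apply Hmax1; lra).
    pose proof (force23_neg (s m2) (t m2) Hpos ltac:(lra)). lra.
  - enough (s m1 <= 0) by lra. apply Rnot_lt_le. intros Hpos.
    assert (Hm1' : 0 < m1 < 1) by (destruct Hm1 as [[ | <-] [ | ->]]; lra).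
    pose proof (forced_ode_force_nonneg_at_max _ _ _ _ _ _ forced_ode_y2 0 1 m1
                  ltac:(lra) ltac:(lra) Hm1' (fun x Hx => Hmax1 x ltac:(lra))).
    assert (s m1 + t m1 <= s m2 + t m2) by (apply (Hmax2 m1); lra).
    pose proof (force2_neg (s m1) (t m1) Hpos ltac:(lra)). lra.
Qed.

Lemma phi_sum_gt_1 : (forall x, 0 < x < 1 -> 0 < Derive s x) ->
  (forall x, 0 < x < 1 -> 0 < Derive s x + Derive t x) ->
  1 < exp (s 0) + exp (s 0) * exp (t 0) ->
  forall x, 0 <= x <= 1 -> 1 < exp (s x) + exp (s x) * exp (t x).
Proof.
  intros Hs Hst H0 x Hx. apply Rlt_le_trans with (1 := H0).
  apply (is_derive_nonneg_le (fun x => exp (s x) + exp (s x) * exp (t x))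
    (fun z => exp (s z) * Derive s z + exp (s z) * exp (t z) * (Derive s z + Derive t z)));
    [lra| |].
  - intros z _. auto_derive; [repeat split; [apply C2_y2|apply C2_y2|apply C2_y3]|].
    change (Derive (fun y => s y) z) with (Derive s z).
    change (Derive (fun y => t y) z) with (Derive t z). ring.
  - intros z Hz. specialize (Hs z ltac:(lra)). specialize (Hst z ltac:(lra)).
    pose proof (exp_pos (s z)). pose proof (exp_pos (t z)).
    assert (0 < exp (s z) * exp (t z)) by (apply Rmult_lt_0_compat; lra). nra.
Qed.

Lemma Derive_y3_neq_0 : t 0 <> 0 -> t 1 = 0 ->
  (forall x, 0 <= x <= 1 -> 1 < exp (s x) + exp (s x) * exp (t x)) ->
  forall x, 0 < x < 1 -> Derive t x <> 0.
Proof.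
  intros Ht0 Ht1 Hpsi x Hx Hz.
  destruct (Rdichotomy _ _ Ht0) as [Hneg|Hpos].
  - enough (0 < Derive t x) by lra.
    apply (forced_ode_derive_pos _ _ _ _ _ _ forced_ode_y3); auto.
    + intros y Hy Hty. apply force3_pos; [exact Hty|apply Hpsi; lra].
    + intros y Hy Hty. apply force3_neg; [exact Hty|apply Hpsi; lra].
  - enough (0 < - Derive t x) by lra.
    apply (forced_ode_derive_pos _ _ _ _ _ _ (forced_ode_opp _ _ _ _ _ _ forced_ode_y3));
      [lra|lra| | |exact Hx].
    + intros y Hy Hty. pose proof (force3_neg (s y) (t y) ltac:(lra) (Hpsi y ltac:(lra))). lra.
    + intros y Hy Hty. pose proof (force3_pos (s y) (t y) ltac:(lra) (Hpsi y ltac:(lra))). lra.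
Qed.

Lemma Derive_y2_y3_nonvanishing : phi1 I1 I2 0 < 1 -> phi1 I1 I2 0 * phi2 I2 I3 0 < 1 ->
  1 < phi1 I1 I2 0 + phi1 I1 I2 0 * phi2 I2 I3 0 -> phi2 I2 I3 0 <> 1 ->
  phi1 I1 I2 1 = 1 -> phi2 I2 I3 1 = 1 ->
  forall x, 0 < x < 1 ->
    Derive s x <> 0 /\ Derive t x <> 0 /\ Derive s x + Derive t x <> 0.
Proof.
  intros Hp0 Hpq0 Hsum Hq0 Hp1 Hq1.
  assert (Es : forall x, exp (s x) = phi1 I1 I2 x)
    by (intros x; apply exp_ln, Rdiv_lt_0_compat; auto).
  assert (Et : forall x, exp (t x) = phi2 I2 I3 x)
    by (intros x; apply exp_ln, Rdiv_lt_0_compat; auto).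
  assert (Hs0 : s 0 < 0) by (apply exp_lt_inv; rewrite exp_0, Es; exact Hp0).
  assert (Hst0 : s 0 + t 0 < 0) by (apply exp_lt_inv; rewrite exp_0, exp_plus, Es, Et; exact Hpq0).
  assert (Hs1 : s 1 = 0) by (unfold y2; rewrite Hp1; apply ln_1).
  assert (Ht1 : t 1 = 0) by (unfold y3; rewrite Hq1; apply ln_1).
  assert (Ht0 : t 0 <> 0) by (intros E; apply Hq0; rewrite <- Et, E; apply exp_0).
  pose proof (y2_y23_nonpos Hs0 Hst0 Hs1 Ht1) as Hnp.
  assert (Hs' : forall x, 0 < x < 1 -> 0 < Derive s x).
  { apply (forced_ode_derive_pos_of_nonpos _ _ _ _ _ _ forced_ode_y2); auto.
    - intros x Hx. apply Hnp. exact Hx.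
    - intros x Hx Hsx. apply force2_pos; [exact Hsx|apply Hnp; lra]. }
  assert (Hst' : forall x, 0 < x < 1 -> 0 < Derive s x + Derive t x).
  { apply (forced_ode_derive_pos_of_nonpos _ _ _ _ _ _ forced_ode_y23); try lra.
    - intros x Hx. apply Hnp. exact Hx.
    - intros x Hx Hstx. apply force23_pos; [exact Hstx|apply Hnp; lra]. }
  assert (Hpsi := phi_sum_gt_1 Hs' Hst' ltac:(rewrite Es, Et; exact Hsum)).
  intros x Hx. specialize (Hs' x Hx). specialize (Hst' x Hx).
  split; [lra|split; [exact (Derive_y3_neq_0 Ht0 Ht1 Hpsi x Hx)|lra]].
Qed.

End SquashingFactors.

Theorem lemma3p1 (I1 I2 I3 : R -> R) (l1 l2 l3 : R) :
  (* the squashing factors I_i: smooth, positive, normalized at the center x = 1 *)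
  smooth I1 -> smooth I2 -> smooth I3 ->
  (forall x, 0 < I1 x) -> (forall x, 0 < I2 x) -> (forall x, 0 < I3 x) ->
  I1 1 = 1 -> I2 1 = 1 -> I3 1 = 1 ->
  (* the boundary metric: lambda_i > 0 pairwise distinct *)
  0 < l1 -> 0 < l2 -> 0 < l3 -> l1 <> l2 -> l2 <> l3 -> l1 <> l3 ->
  (* K(0) < 1 *)
  KK I1 I2 I3 0 < 1 ->
  (* the ODE system on (0,1) *)
  (forall x, 0 < x < 1 ->
     eq1 I1 I2 I3 x /\ eq2 I1 I2 I3 x /\ eq3 I1 I2 I3 x /\ eq4 I1 I2 I3 x) ->
  (* boundary conditions *)
  phi1 I1 I2 0 = l2 / l1 -> phi2 I2 I3 0 = l3 / l2 ->
  KK I1 I2 I3 1 = 1 -> phi1 I1 I2 1 = 1 -> phi2 I2 I3 1 = 1 ->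
  Derive (y1 I1 I2 I3) 0 = 0 -> Derive (y2 I1 I2) 0 = 0 -> Derive (y3 I2 I3) 0 = 0 ->
  Derive (y1 I1 I2 I3) 1 = 0 -> Derive (y2 I1 I2) 1 = 0 -> Derive (y3 I2 I3) 1 = 0 ->
  (forall x, 0 < x < 1 -> 0 < Derive (y1 I1 I2 I3) x) /\
  (phi1 I1 I2 0 < 1 -> phi1 I1 I2 0 * phi2 I2 I3 0 < 1 ->
   1 < phi1 I1 I2 0 + phi1 I1 I2 0 * phi2 I2 I3 0 ->
   forall x, 0 < x < 1 ->
     Derive (y2 I1 I2) x <> 0 /\ Derive (y3 I2 I3) x <> 0 /\
     Derive (y2 I1 I2) x + Derive (y3 I2 I3) x <> 0).
Proof.
  intros HI1 HI2 HI3 PI1 PI2 PI3 _ _ _ _ Hl2 _ _ Hl23 _ HK0 Hode _ Hq0 HK1 Hp1 Hq1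
    _ _ _ _ _ _.
  split.
  - exact (Derive_y1_pos I1 I2 I3 HI1 HI2 HI3 PI1 PI2 PI3 Hode HK0 HK1 Hp1 Hq1).
  - intros Hp0 Hpq0 Hsum.
    apply (Derive_y2_y3_nonvanishing I1 I2 I3 HI1 HI2 HI3 PI1 PI2 PI3 Hode); auto.
    rewrite Hq0. intros E. apply Hl23.
    apply (Rmult_eq_reg_r (/ l2)); [|apply Rinv_neq_0_compat; lra].
    rewrite Rinv_r by lra. symmetry. exact E.
Qed.
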